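(* For every fixed positive integer $n$ there exists $\varepsilon>0$ such that for every positive integer $N$ there is no partitioning $f$ of the complete directed graph with loops $K_N$ on $N$ vertices (vertex set $V$ with $|V|=N$ and edge set $E=V\times V$) into $n$ partitions such that both (1) $\mathrm{rf}(f,v)\le k(n)-1$ for all $v\in V$, and (2) $\mathrm{ib}(f)\le 1+\varepsilon$.
   Context: Let $G=(V,E)$ be a directed graph and $P$ an $n$-element set (the partitions). A graph partitioning (partitioning into $n$ partitions) is a function $f:E\to P$. Its imbalance is $\mathrm{ib}(f)=\dfrac{\max_{l\in P}|\{e\in E: f(e)=l\}|}{|E|/n}$. For $v\in V$ let $E(v)$ be the set of edges incident to $v$; the replication factor of $v$ is $\mathrm{rf}(f,v)=|f(E(v))|$. A system on $n$ elements is a triple $(\mathcal{F},w,s)$ where $\mathcal{F}=(F_1,\dots,F_m)$ is a collection of subsets of $[n]$, $w\in[0,1]^m$ with $\sum_i w_i=1$, and $s\in[0,1]^{m\times m\times n}$ with $\sum_p s_{ijp}=1$ for all $i,j$. It is intersecting if for all $i,j,p$, $s_{ijp}>0$ implies $p\in F_i\cap F_j$. It is balanced if for all $p\in[n]$, $\sum_{i,j} w_iw_js_{ijp}=1/n$. Its cardinality is the size of the largest set in $\mathcal{F}$. $k(n)$ is the minimum $k$ such that there exists a balanced intersecting system on $n$ elements with cardinality $k$. *)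

From HB Require Import structures.
From mathcomp Require Import all_boot all_order all_algebra.
From mathcomp Require Import reals.
Set Implicit Arguments. Unset Strict Implicit. Unset Printing Implicit Defensive.
Import Order.TTheory GRing.Theory Num.Theory.
Local Open Scope ring_scope.

Definition is_system (R : realType) (n m : nat) (F : 'I_m -> {set 'I_n})
  (w : 'I_m -> R) (s : 'I_m -> 'I_m -> 'I_n -> R) : Prop :=
  (forall i, 0 <= w i <= 1) /\ \sum_(i < m) w i = 1 /\
  (forall i j p, 0 <= s i j p <= 1) /\
  (forall i j, \sum_(p < n) s i j p = 1).

Definition intersecting (R : realType) (n m : nat) (F : 'I_m -> {set 'I_n})
  (s : 'I_m -> 'I_m -> 'I_n -> R) : Prop :=
  forall i j p, 0 < s i j p -> p \in F i :&: F j.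

Definition balanced (R : realType) (n m : nat)
  (w : 'I_m -> R) (s : 'I_m -> 'I_m -> 'I_n -> R) : Prop :=
  forall p : 'I_n, \sum_(i < m) \sum_(j < m) w i * w j * s i j p = n%:R^-1.

Definition cardinality (n m : nat) (F : 'I_m -> {set 'I_n}) : nat :=
  (\max_(i < m) #|F i|)%N.

Definition has_bis (R : realType) (n k : nat) : Prop :=
  exists (m : nat) (F : 'I_m -> {set 'I_n}) (w : 'I_m -> R)
         (s : 'I_m -> 'I_m -> 'I_n -> R),
    is_system F w s /\ intersecting F s /\ balanced w s /\ cardinality F = k.

Definition is_k_of (R : realType) (n k : nat) : Prop :=
  has_bis R n k /\ forall k', has_bis R n k' -> (k <= k')%N.

Definition incident (N : nat) (v : 'I_N) : {set 'I_N * 'I_N} :=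
  [set e | (e.1 == v) || (e.2 == v)].

Definition rf (N n : nat) (f : 'I_N * 'I_N -> 'I_n) (v : 'I_N) : nat :=
  #|f @: incident v|.

Definition ib (R : realType) (N n : nat) (f : 'I_N * 'I_N -> 'I_n) : R :=
  (\max_(l < n) #|[set e | f e == l]|)%N%:R / ((N * N)%N%:R / n%:R).

From HB Require Import structures.
From mathcomp Require Import all_boot all_order all_algebra.
From mathcomp Require Import reals.
From mathcomp Require Import all_classical all_reals all_analysis.
Import Order.TTheory GRing.Theory Num.Theory.
Set Implicit Arguments. Unset Strict Implicit. Unset Printing Implicit Defensive.
Import numFieldNormedType.Exports.
Local Open Scope ring_scope.

(* A partitioning f of K_N induces a fractional system on the subsets of [n]:
   w A is the fraction of vertices whose replica set f(E(v)) is A, and y A B p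
   the fraction of edges (u, v) with replica sets A and B that f puts in p.
   As f(u, v) lies in both replica sets, y A B p vanishes unless p is in A ∩ B;
   rf <= k(n) - 1 gives weight 0 to sets of size >= k(n); ib <= 1 + ε bounds
   every load Σ_{A,B} y A B p by (1 + ε)/n.  These conditions are closed, so if
   such partitionings existed for all ε = 1/(j+1), a limit point would satisfy
   them with ε = 0.  The loads then sum to 1 while each is at most 1/n, so all
   equal 1/n, and s = y / (w_A w_B) on the support of w is a balanced
   intersecting system of cardinality < k(n), contradicting minimality. *)

Section ApproxSystem.
Variables (R : realType) (n k : nat).
Implicit Types (e : R) (w : {set 'I_n} -> R).
Implicit Types (y : {set 'I_n} -> {set 'I_n} -> 'I_n -> R).

(* [y A B p] stands for [w A * w B * s A B p]; the system runs over all subsets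
   of [n], those of size at least [k] having weight [0]. *)
Record approx_bis e w y : Prop := ApproxBis {
  approx_bis_w_ge0 : forall A, 0 <= w A;
  approx_bis_w_sum : \sum_A w A = 1;
  approx_bis_y_ge0 : forall A B p, 0 <= y A B p;
  approx_bis_y_sum : forall A B, \sum_p y A B p = w A * w B;
  approx_bis_y_out : forall A B p, p \notin A :&: B -> y A B p = 0;
  approx_bis_w_big : forall A : {set 'I_n}, (k <= #|A|)%N -> w A = 0;
  approx_bis_load : forall p, \sum_A \sum_B y A B p <= (1 + e) / n%:R }.

Lemma approx_bis_w_le1 e w y A : approx_bis e w y -> w A <= 1.
Proof.
move=> wy; rewrite -(approx_bis_w_sum wy) (bigD1 A) //= lerDl.
by rewrite sumr_ge0 // => B _; apply: approx_bis_w_ge0 wy B.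
Qed.

Lemma approx_bis_y_le e w y A B p : approx_bis e w y -> y A B p <= w A * w B.
Proof.
move=> wy; rewrite -(approx_bis_y_sum wy) (bigD1 p) //= lerDl.
by rewrite sumr_ge0 // => q _; apply: approx_bis_y_ge0 wy A B q.
Qed.

Lemma approx_bis_y_le1 e w y A B p : approx_bis e w y -> y A B p <= 1.
Proof.
move=> wy; apply: le_trans (approx_bis_y_le A B p wy) _.
by rewrite mulr_ile1 ?(approx_bis_w_ge0 wy) ?(approx_bis_w_le1 _ wy).
Qed.

Lemma approx_bis_total_load e w y :
  approx_bis e w y -> \sum_p \sum_A \sum_B y A B p = 1.
Proof.
move=> wy; rewrite exchange_big; under eq_bigr do rewrite exchange_big.
under eq_bigr do under eq_bigr do rewrite (approx_bis_y_sum wy).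
by rewrite -big_distrlr /= (approx_bis_w_sum wy) mulr1.
Qed.

Lemma approx_bis_y_eq0 e w y A B p :
  approx_bis e w y -> w A * w B = 0 -> y A B p = 0.
Proof.
move=> wy wAB; apply/le_anti; rewrite (approx_bis_y_ge0 wy) andbT.
by rewrite -wAB (approx_bis_y_le _ _ _ wy).
Qed.

Lemma approx_bis_sum_support e w y (G : {set 'I_n} -> R) :
  approx_bis e w y -> (forall A, w A = 0 -> G A = 0) ->
  \sum_(A in [set A | 0 < w A]) G A = \sum_A G A.
Proof.
move=> wy G0; rewrite [RHS](bigID (mem [set A | 0 < w A])) /=.
rewrite [X in _ + X]big1 ?addr0 // => A; rewrite inE -leNgt => wA_le0.
by apply: G0; apply/le_anti; rewrite wA_le0 (approx_bis_w_ge0 wy).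
Qed.

Lemma approx_bis_k_gt0 e w y : approx_bis e w y -> (0 < k)%N.
Proof.
move=> wy; rewrite lt0n; apply/eqP => k0; have := approx_bis_w_sum wy.
rewrite big1 => [/esym/eqP|A _]; first by rewrite oner_eq0.
by apply: (approx_bis_w_big wy); rewrite k0.
Qed.

Hypothesis n_gt0 : (0 < n)%N.

Lemma approx_bis0_load w y p :
  approx_bis 0 w y -> \sum_A \sum_B y A B p = n%:R^-1.
Proof.
move=> wy.
have slack0 : \sum_q (n%:R^-1 - \sum_A \sum_B y A B q) = 0.
  rewrite sumrB (approx_bis_total_load wy) sumr_const card_ord -[_ *+ n]mulr_natl.
  by rewrite mulfV ?subrr // pnatr_eq0 -lt0n.
apply/esym/eqP; rewrite -subr_eq0; apply/eqP.
move/psumr_eq0P: slack0 => -> // q _.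
by rewrite subr_ge0 (le_trans (approx_bis_load wy q)) // addr0 mul1r.
Qed.

Lemma approx_bis0_has_bis w y :
  approx_bis 0 w y -> exists2 c, (c < k)%N & has_bis R n c.
Proof.
move=> wy; pose S := [set A | 0 < w A].
pose F (i : 'I_#|S|) := enum_val i.
pose w' i := w (F i).
pose s' i j p := y (F i) (F j) p / (w' i * w' j).
have w'_gt0 i : 0 < w' i by have := enum_valP i; rewrite inE.
have w'w'_gt0 i j : 0 < w' i * w' j by rewrite mulr_gt0.
exists (\max_i #|F i|)%N.
  have k_gt0 := approx_bis_k_gt0 wy.
  rewrite -(prednK k_gt0) ltnS; apply/bigmax_leqP => i _; rewrite -ltnS prednK //.
  rewrite ltnNge; apply/negP => /(approx_bis_w_big wy) wF0.
  by have := w'_gt0 i; rewrite /w' wF0 ltxx.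
exists #|S|, F, w', s'; split; [|split; [|split]] => //.
- split; [|split; [|split]].
  + by move=> i; rewrite (approx_bis_w_ge0 wy) (approx_bis_w_le1 _ wy).
  + rewrite /w' /F -(big_enum_val w) (approx_bis_sum_support wy) //.
    exact: approx_bis_w_sum wy.
  + move=> i j p; rewrite divr_ge0 ?(approx_bis_y_ge0 wy) ?(ltW (w'w'_gt0 i j)) //=.
    by rewrite ler_pdivrMr // mul1r (approx_bis_y_le _ _ _ wy).
  + move=> i j; rewrite /s' -mulr_suml (approx_bis_y_sum wy).
    by rewrite -/(w' i) -/(w' j) divff // gt_eqF.
- move=> i j p; apply: contraTT => pFF.
  by rewrite /s' (approx_bis_y_out wy) // mul0r ltxx.
- move=> p; rewrite -(approx_bis0_load p wy).
  rewrite -(approx_bis_sum_support wy) => [|A wA0]; last first.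
    by rewrite big1 // => B _; apply: (approx_bis_y_eq0 p wy); rewrite wA0 mul0r.
  rewrite (big_enum_val (fun A => \sum_B y A B p)); apply: eq_bigr => i _.
  rewrite -(approx_bis_sum_support wy) => [|B wB0]; last first.
    by apply: (approx_bis_y_eq0 p wy); rewrite wB0 mulr0.
  rewrite (big_enum_val (fun B => y (F i) B p)); apply: eq_bigr => j _.
  by rewrite /s' mulrC divfK ?gt_eqF.
Qed.

End ApproxSystem.

Lemma sum_card_fibers (T U : finType) (P : pred T) (g : T -> U) :
  (\sum_u #|[set t | P t & g t == u]| = #|[set t | P t]|)%N.
Proof.
rewrite -sum1dep_card (partition_big g predT) //.
by apply: eq_bigr => u _; rewrite sum1dep_card.
Qed.

Section Partitioning.
Variables (R : realType) (N n : nat) (f : 'I_N * 'I_N -> 'I_n).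
Hypothesis N_gt0 : (0 < N)%N.

Definition replicas (v : 'I_N) := f @: incident v.

Definition vertex_share (A : {set 'I_n}) : R :=
  #|[set v | replicas v == A]|%:R / N%:R.

Definition edge_share (A B : {set 'I_n}) (p : 'I_n) : R :=
  #|[set x | (replicas x.1, replicas x.2) == (A, B) & f x == p]|%:R / (N * N)%:R.

Lemma replicas_fst x : f x \in replicas x.1.
Proof. by apply: imset_f; rewrite inE eqxx. Qed.

Lemma replicas_snd x : f x \in replicas x.2.
Proof. by apply: imset_f; rewrite inE eqxx orbT. Qed.

Lemma vertex_share_sum : \sum_A vertex_share A = 1.
Proof.
rewrite -mulr_suml -natr_sum (sum_card_fibers predT replicas).
by rewrite cardsT card_ord divff // pnatr_eq0 -lt0n.
Qed.

Lemma edge_share_sum A B :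
  \sum_p edge_share A B p = vertex_share A * vertex_share B.
Proof.
rewrite -mulr_suml -natr_sum sum_card_fibers natrM invfM mulrACA -natrM -cardsX.
by congr (_%:R * _); apply: eq_card => x; rewrite !inE xpair_eqE.
Qed.

Lemma edge_share_out A B p : p \notin A :&: B -> edge_share A B p = 0.
Proof.
move=> pAB; apply/eqP; rewrite mulf_eq0 pnatr_eq0 cards_eq0; apply/orP; left.
apply/eqP/setP => x; rewrite !inE xpair_eqE; apply: contraNF pAB.
by move=> /andP[/andP[/eqP <- /eqP <-] /eqP <-]; rewrite inE replicas_fst replicas_snd.
Qed.

Lemma vertex_share_big k (A : {set 'I_n}) :
  (forall v, rf f v <= k - 1)%N -> (k <= #|A|)%N -> vertex_share A = 0.
Proof.
move=> rf_le kA; apply/eqP; rewrite mulf_eq0 pnatr_eq0 cards_eq0; apply/orP; left.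
apply/eqP/setP => v; rewrite !inE; apply/negP => /eqP vA.
have A_gt0 : (0 < #|A|)%N.
  by apply/card_gt0P; exists (f (v, v)); rewrite -vA replicas_fst.
have := rf_le v; rewrite /rf -/(replicas v) vA => A_le.
have := leq_trans kA A_le; rewrite leqNgt ltn_subrL /=.
by rewrite (leq_trans (leq_trans A_gt0 A_le) (leq_subr 1 k)).
Qed.

Lemma edge_share_load e p :
  ib R f <= 1 + e -> \sum_A \sum_B edge_share A B p <= (1 + e) / n%:R.
Proof.
move=> ib_le; under eq_bigr do rewrite -mulr_suml -natr_sum.
rewrite -mulr_suml -natr_sum pair_bigA /=.
have -> : (\sum_(AB : {set 'I_n} * {set 'I_n})
    #|[set x | (replicas x.1, replicas x.2) == (AB.1, AB.2) & f x == p]|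
    = #|[set x | f x == p]|)%N.
  rewrite -(sum_card_fibers (fun x => f x == p)
                             (fun x => (replicas x.1, replicas x.2))).
  by apply: eq_bigr => -[A B] _; apply: eq_card => x; rewrite !inE andbC.
set M := (\max_(l < n) #|[set x | f x == l]|)%N.
have fp_le_M : #|[set x | f x == p]|%:R <= M%:R :> R.
  by rewrite ler_nat (leq_bigmax (F := fun l => #|[set x | f x == l]|)).
apply: le_trans (ler_wpM2r _ fp_le_M) _; first by rewrite invr_ge0.
have -> : M%:R / (N * N)%:R = ib R f / n%:R :> R.
  rewrite /ib -/M invf_div mulrA mulrAC mulfK // pnatr_eq0 -lt0n.
  exact: leq_ltn_trans (leq0n p) (ltn_ord p).
by rewrite ler_wpM2r // invr_ge0.
Qed.

Lemma partitioning_approx_bis k e :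
  (forall v, rf f v <= k - 1)%N -> ib R f <= 1 + e ->
  approx_bis k e vertex_share edge_share.
Proof.
move=> rf_le ib_le; split.
- by move=> A; rewrite divr_ge0.
- exact: vertex_share_sum.
- by move=> A B p; rewrite divr_ge0.
- exact: edge_share_sum.
- exact: edge_share_out.
- by move=> A; apply: vertex_share_big.
- by move=> p; apply: edge_share_load.
Qed.

End Partitioning.

Section Compactness.
Local Open Scope classical_set_scope.

Lemma increasing_seq_cvgny (phi : nat -> nat) :
  increasing_seq phi -> phi @ \oo --> \oo.
Proof.
move=> /increasing_seqP phi_incr; apply/cvgnyPge => M; exists M => // j /= Mj.
suff id_le i : (i <= phi i)%N by apply: leq_trans Mj (id_le j).
by elim: i => // i IH; apply: leq_ltn_trans IH (phi_incr i).
Qed.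

Lemma cvgn_subseq (T : topologicalType) (u : nat -> T) (l : T) (phi : nat -> nat) :
  increasing_seq phi -> u @ \oo --> l -> (u \o phi) @ \oo --> l.
Proof. by move=> /increasing_seq_cvgny; apply: cvg_comp. Qed.

Lemma finite_bolzano_weierstrass (R : realType) (X : finType) (u : nat -> X -> R) :
  (forall x, bounded_fun (u^~ x)) ->
  exists2 phi : nat -> nat,
    increasing_seq phi & forall x, cvgn (fun j => u (phi j) x).
Proof.
move=> u_bnd; suff [phi phi_incr phi_cvg] : exists2 phi : nat -> nat,
    increasing_seq phi & forall x, x \in enum X -> cvgn (fun j => u (phi j) x).
  by exists phi => // x; apply: phi_cvg; rewrite mem_enum.
elim: (enum X) => [|x s [phi phi_incr phi_cvg]]; first by exists id.
have ux_bnd : bounded_fun (fun j => u (phi j) x).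
  move: (u_bnd x); rewrite /= /bounded_near.
  by apply: filterS => M Mb j _; apply: Mb.
have [psi psi_incr psi_cvg] := bolzano_weierstrass ux_bnd.
exists (phi \o psi) => [a b|y]; first by rewrite /= phi_incr -leEnat psi_incr.
rewrite inE => /predU1P[-> //|ys].
have /cvg_ex[l ul] := phi_cvg y ys.
by apply/cvg_ex; exists l; apply: (cvgn_subseq (u := fun j => u (phi j) y)).
Qed.

Lemma cvgn_sum (R : realType) (X : finType) (u : nat -> X -> R) (l : X -> R) :
  (forall x, u^~ x @ \oo --> l x) -> (fun j => \sum_x u j x) @ \oo --> \sum_x l x.
Proof. by move=> ul; apply: cvg_big => //; apply: add_continuous. Qed.

Lemma cvgn_eq_limits (R : realType) (u v : nat -> R) (a b : R) :
  u @ \oo --> a -> v @ \oo --> b -> u =1 v -> a = b.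
Proof. by move=> + vb /funext uv; rewrite uv => va; apply: cvg_unique va vb. Qed.

Variables (R : realType) (n k : nat).

Lemma approx_bis_cvg (e_ : R^nat) e (w_ : nat -> {set 'I_n} -> R)
    (y_ : nat -> {set 'I_n} -> {set 'I_n} -> 'I_n -> R) w y :
  e_ @ \oo --> e -> (forall A, w_^~ A @ \oo --> w A) ->
  (forall A B p, (fun j => y_ j A B p) @ \oo --> y A B p) ->
  (forall j, approx_bis k (e_ j) (w_ j) (y_ j)) -> approx_bis k e w y.
Proof.
move=> e_e w_w y_y wy_; split.
- move=> A; apply: cvgr_to_ge (w_w A) _; apply: nearW => j.
  exact: approx_bis_w_ge0 (wy_ j) A.
- apply: cvgn_eq_limits (cvgn_sum w_w) (cvg_cst (1 : R)) _ => // j.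
  exact: approx_bis_w_sum (wy_ j).
- move=> A B p; apply: cvgr_to_ge (y_y A B p) _; apply: nearW => j.
  exact: approx_bis_y_ge0 (wy_ j) A B p.
- move=> A B.
  apply: cvgn_eq_limits (cvgn_sum (y_y A B)) (cvgM (w_w A) (w_w B)) _ => // j.
  exact: approx_bis_y_sum (wy_ j) A B.
- move=> A B p pAB; apply: cvgn_eq_limits (y_y A B p) (cvg_cst (0 : R)) _ => // j.
  exact: approx_bis_y_out (wy_ j) A B p pAB.
- move=> A kA; apply: cvgn_eq_limits (w_w A) (cvg_cst (0 : R)) _ => // j.
  exact: approx_bis_w_big (wy_ j) A kA.
- move=> p; have load_cvg := cvgn_sum (fun A => cvgn_sum (fun B => y_y A B p)).
  have bound_cvg : (fun j => (1 + e_ j) / n%:R) @ \oo --> (1 + e) / n%:R.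
    by apply: cvgMl; apply: cvgD => //; apply: cvg_cst.
  apply: ler_cvg_to load_cvg bound_cvg _.
  by apply: nearW => j; apply: approx_bis_load (wy_ j) p.
Qed.

Lemma approx_bis_limit (e_ : R^nat) e :
  e_ @ \oo --> e ->
  (forall j, exists (w : {set 'I_n} -> R) y, approx_bis k (e_ j) w y) ->
  exists (w : {set 'I_n} -> R) y, approx_bis k e w y.
Proof.
move=> e_e wy_ex.
have /choice[wy_ wy_P] : forall j, exists wy : ({set 'I_n} -> R) *
    ({set 'I_n} -> {set 'I_n} -> 'I_n -> R), approx_bis k (e_ j) wy.1 wy.2.
  by move=> j; have [w [y wy]] := wy_ex j; exists (w, y).
pose u j (x : {set 'I_n} + {set 'I_n} * {set 'I_n} * 'I_n) :=
  match x with inl A => (wy_ j).1 A | inr t => (wy_ j).2 t.1.1 t.1.2 t.2 end.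
have u01 j x : 0 <= u j x <= 1.
  case: x => [A|[[A B] p]] /=.
    by rewrite (approx_bis_w_ge0 (wy_P j)) (approx_bis_w_le1 _ (wy_P j)).
  by rewrite (approx_bis_y_ge0 (wy_P j)) (approx_bis_y_le1 _ _ _ (wy_P j)).
have u_bnd x : bounded_fun (u^~ x).
  exists 1; split => [|M M_gt1 j _ /=]; first by rewrite realE ler01.
  have /andP[u_ge0 u_le1] := u01 j x.
  by rewrite ger0_norm // (le_trans u_le1) // ltW.
have [phi phi_incr phi_cvg] := finite_bolzano_weierstrass u_bnd.
exists (fun A => lim (u (phi j) (inl A) @[j --> \oo])).
exists (fun A B p => lim (u (phi j) (inr (A, B, p)) @[j --> \oo])).
apply: approx_bis_cvg (cvgn_subseq phi_incr e_e) _ _ (fun j => wy_P (phi j)).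
- by move=> A; apply: (phi_cvg (inl A)).
- by move=> A B p; apply: (phi_cvg (inr (A, B, p))).
Qed.

End Compactness.

Theorem theorem2 (R : realType) (n : nat) (hn : (0 < n)%N) (kn : nat)
  (hk : is_k_of R n kn) :
  exists eps : R, 0 < eps /\
    forall (N : nat), (0 < N)%N ->
      ~ exists f : 'I_N * 'I_N -> 'I_n,
          (forall v : 'I_N, (rf f v <= kn - 1)%N) /\ ib R f <= 1 + eps.
Proof.
have [_ k_min] := hk.
have [small_eps|/existsNP[j no_partitioning]] := pselect (forall j : nat,
    exists N (f : 'I_N * 'I_N -> 'I_n), (0 < N)%N /\
      (forall v, (rf f v <= kn - 1)%N) /\ ib R f <= 1 + j.+1%:R^-1); last first.
  exists j.+1%:R^-1; split; first by rewrite invr_gt0 ltr0n.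
  by move=> N N_gt0 [f [rf_le ib_le]]; apply: no_partitioning; exists N, f.
have [w [y wy]] : exists (w : {set 'I_n} -> R) y, approx_bis kn 0 w y.
  apply: (approx_bis_limit cvg_harmonic) => j.
  have [N [f [N_gt0 [rf_le ib_le]]]] := small_eps j.
  by exists (vertex_share R f), (edge_share R f); apply: partitioning_approx_bis.
have [c c_lt_kn /k_min] := approx_bis0_has_bis hn wy.
by rewrite leqNgt c_lt_kn.
Qed.
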